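(* In the setting below, let $p\neq0$, $a_0,a_2,a_3$ be real constants with $a_2\neq0$, suppose $M$ has constant sectional curvature $K=\dfrac{a_0}{a_2s^2}$, and put $\tilde\theta=-2p\theta$, $\omega_1=a_0\alpha_0+a_2\alpha_2+a_3\,d\theta$ (so $d\omega_1=0$). A natural SU(2)-structure $(\tilde\theta,\omega_1,\omega_2,\omega_3)$ on $\mathcal S$ with these $\tilde\theta,\omega_1$ is double-hypo if and only if there are real constants $b_0,b_1,b_2$ with $$\omega_2=b_0\alpha_0+b_1\alpha_1+b_2\alpha_2,\qquad \omega_3=\frac{Kb_1}{3p}\alpha_0+\frac{s^2Kb_2-b_0}{6s^2p}\alpha_1-\frac{b_1}{3s^2p}\alpha_2,$$ satisfying $$a_3^2-a_0a_2=a_3p,\quad b_1^2-b_0b_2=a_3p,\quad a_0b_2+a_2b_0=0,\quad b_0^2-2s^2Kb_0b_2+s^4K^2b_2^2+4s^2Kb_1^2=36s^4a_3p^3,$$ together with $a_0a_2>0$ and $a_3p>0$. Moreover, in this case $M$ has positive constant sectional curvature $K=9s^2p^2$.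
   Context: Let $(M,g)$ be a connected oriented Riemannian 3-manifold, $s>0$, and $\mathcal S=\{u\in TM:\|u\|=s\}$ the total space of the radius-$s$ tangent sphere bundle with the canonical (Sasaki-induced) metric. An adapted frame at $u\in\mathcal S$: take a positively oriented orthonormal frame $(f_0=u/s,f_1,f_2)$ of $T_{\pi(u)}M$ and set $e_0=f_0^h,e_1=f_1^h,e_2=f_2^h,e_3=f_1^v,e_4=f_2^v$ (horizontal and vertical lifts); dual coframe $e^0,\dots,e^4$, $e^{ij}=e^i\wedge e^j$. Globally defined forms: $\theta=s\,e^0$, $\alpha_0=e^{12}$, $\alpha_1=e^{14}-e^{23}$, $\alpha_2=e^{34}$, $d\theta=e^{31}+e^{42}$; $\alpha_i\wedge d\theta=0$, $\alpha_0\wedge\alpha_1=\alpha_2\wedge\alpha_1=0$, $\alpha_0\wedge\alpha_2=-\frac12\alpha_1\wedge\alpha_1=-\frac12 d\theta\wedge d\theta=e^{1234}$. For constant sectional curvature $K$: $d\alpha_0=s^{-2}\theta\wedge\alpha_1$, $d\alpha_1=2s^{-2}\theta\wedge\alpha_2-2K\theta\wedge\alpha_0$, $d\alpha_2=-K\theta\wedge\alpha_1$. An SU(2)-structure: $(\tilde\theta,\omega_1,\omega_2,\omega_3)$ with (C1) $\tilde\theta\wedge\omega_1\wedge\omega_1\neq0$, $\omega_i\wedge\omega_j=0$ ($i\ne j$), $\omega_1\wedge\omega_1=\omega_2\wedge\omega_2=\omega_3\wedge\omega_3=2v$, $v$ nowhere zero; (C2) $x\lrcorner\omega_1=y\lrcorner\omega_2\Rightarrow\omega_3(x,y)\ge0$.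 Hypo: $d\omega_1=0$, $d(\tilde\theta\wedge\omega_2)=d(\tilde\theta\wedge\omega_3)=0$. Nearly-hypo: $d\omega_2=3\tilde\theta\wedge\omega_3$, $d(\tilde\theta\wedge\omega_1)=-2\omega_1\wedge\omega_1$. Double-hypo: both hypo and nearly-hypo. Natural SU(2)-structure on $\mathcal S$: $\tilde\theta=-2p\theta$ ($p\ne0$ constant), each $\omega_i$ a constant-coefficient combination of $\alpha_0,\alpha_1,\alpha_2,d\theta$. *)

(* real numbers from Stdlib Reals.
   Pointwise model of constant-coefficient forms on the tangent sphere bundle
   in an adapted coframe e^0,...,e^4. *)
From Stdlib Require Import Reals List Arith.
Import ListNotations.
Open Scope R_scope.

(** A form on R^5: coefficient of e^{i1...ik}, read on strictly increasing
    index lists [i1;...;ik] with entries in {0,...,4}. *)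
Definition form := list nat -> R.

Definition fzero : form := fun _ => 0.
Definition fadd (a b : form) : form := fun L => a L + b L.
Definition fscale (c : R) (a : form) : form := fun L => c * a L.

Definition e (i : nat) : form :=
  fun L => if list_eq_dec Nat.eq_dec L [i] then 1 else 0.

Fixpoint splits (L : list nat) : list (list nat * list nat) :=
  match L with
  | [] => [([], [])]
  | x :: t =>
      map (fun pr => (x :: fst pr, snd pr)) (splits t) ++
      map (fun pr => (fst pr, x :: snd pr)) (splits t)
  end.

Fixpoint inv (I J : list nat) : nat :=
  match I with
  | [] => 0
  | i :: t => (length (filter (fun j => Nat.ltb j i) J) + inv t J)%nat
  end.

Definition Rsum (l : list R) : R := fold_right Rplus 0 l.

Definition wedge (a b : form) : form :=
  fun L => Rsum (map (fun pr => (-1) ^ (inv (fst pr) (snd pr))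
                                * a (fst pr) * b (snd pr)) (splits L)).

Definition idx5 : list nat := [0; 1; 2; 3; 4]%nat.
(** all increasing index lists (basis of the exterior algebra of R^5) *)
Definition basis_lists : list (list nat) := map fst (splits idx5).

Definition feq (a b : form) : Prop := forall L, In L basis_lists -> a L = b L.
Definition fnonzero (a : form) : Prop := exists L, In L basis_lists /\ a L <> 0.

Definition comp2 (w : form) (i j : nat) : R :=
  if Nat.ltb i j then w [i; j] else if Nat.ltb j i then - w [j; i] else 0.
Definition eval2 (w : form) (x y : nat -> R) : R :=
  Rsum (map (fun i => Rsum (map (fun j => comp2 w i j * x i * y j) idx5)) idx5).

Definition theta (s : R) : form := fscale s (e 0).
Definition alpha0 : form := wedge (e 1) (e 2).
Definition alpha1 : form := fadd (wedge (e 1) (e 4)) (fscale (-1) (wedge (e 2) (e 3))).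
Definition alpha2 : form := wedge (e 3) (e 4).
Definition dtheta : form := fadd (wedge (e 3) (e 1)) (wedge (e 4) (e 2)).

Record NF := mkNF { n0 : R; n1 : R; n2 : R; n3 : R }.
Definition nf (w : NF) : form :=
  fadd (fscale (n0 w) alpha0) (fadd (fscale (n1 w) alpha1)
    (fadd (fscale (n2 w) alpha2) (fscale (n3 w) dtheta))).

(** exterior derivatives for constant sectional curvature K *)
Definition d_alpha0 (s : R) : form := fscale (/ s ^ 2) (wedge (theta s) alpha1).
Definition d_alpha1 (s K : R) : form :=
  fadd (fscale (2 / s ^ 2) (wedge (theta s) alpha2))
       (fscale (-2 * K) (wedge (theta s) alpha0)).
Definition d_alpha2 (s K : R) : form := fscale (- K) (wedge (theta s) alpha1).
(** d of a natural 2-form (d(dtheta) = 0) *)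
Definition d_nf (s K : R) (w : NF) : form :=
  fadd (fscale (n0 w) (d_alpha0 s)) (fadd (fscale (n1 w) (d_alpha1 s K))
    (fadd (fscale (n2 w) (d_alpha2 s K)) fzero)).

Definition ttheta (s p : R) : form := fscale (-2 * p) (theta s).
(** d(ttheta /\ w) = d(ttheta) /\ w - ttheta /\ dw, with d(ttheta) = -2p dtheta *)
Definition d_ttheta_wedge (s K p : R) (w : NF) : form :=
  fadd (wedge (fscale (-2 * p) dtheta) (nf w))
       (fscale (-1) (wedge (ttheta s p) (d_nf s K w))).

Definition SU2 (th o1 o2 o3 : form) : Prop :=
  (fnonzero (wedge th (wedge o1 o1)) /\
   feq (wedge o1 o2) fzero /\ feq (wedge o1 o3) fzero /\ feq (wedge o2 o3) fzero /\
   exists v, fnonzero v /\ feq (wedge o1 o1) (fscale 2 v) /\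
             feq (wedge o2 o2) (fscale 2 v) /\ feq (wedge o3 o3) (fscale 2 v)) /\
  (forall x y : nat -> R,
      (forall z : nat -> R, eval2 o1 x z = eval2 o2 y z) -> eval2 o3 x y >= 0).

Definition natural_SU2 (s p : R) (w1 w2 w3 : NF) : Prop :=
  SU2 (ttheta s p) (nf w1) (nf w2) (nf w3).

Definition hypo (s K p : R) (w1 w2 w3 : NF) : Prop :=
  feq (d_nf s K w1) fzero /\
  feq (d_ttheta_wedge s K p w2) fzero /\ feq (d_ttheta_wedge s K p w3) fzero.

Definition nearly_hypo (s K p : R) (w1 w2 w3 : NF) : Prop :=
  feq (d_nf s K w2) (fscale 3 (wedge (ttheta s p) (nf w3))) /\
  feq (d_ttheta_wedge s K p w1) (fscale (-2) (wedge (nf w1) (nf w1))).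

Definition double_hypo (s K p : R) (w1 w2 w3 : NF) : Prop :=
  hypo s K p w1 w2 w3 /\ nearly_hypo s K p w1 w2 w3.

From Pilot Require Import Defs.
From Stdlib Require Import Reals List Lra Bool Setoid Morphisms.
Import ListNotations.
Open Scope R_scope.

(* Everything is a constant-coefficient form in the adapted coframe, so each condition
   becomes algebra on coefficients: [nf a /\ nf b] is [wedge_coef a b] times e^1234,
   [d (nf w)] is [theta /\ nf w'] for an explicit [w'], and [d(ttheta /\ nf w)] is
   [4 p n3 w] times e^1234.  Hypo and nearly-hypo thus say that [omega2], [omega3] have no
   [dtheta]-part, that [omega3] is determined by [omega2], and that [a3^2 - a0 a2 = a3 p];
   the SU(2) relations [omega1 /\ omega2 = 0], [omega_i /\ omega_i = omega1 /\ omega1 <> 0]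
   give the remaining equations.  With [b0 = -s^2 K b2] the relation for [omega3 /\ omega3]
   reads [4 s^2 K a3 p = 36 s^4 p^2 a3 p], which forces [K = 9 s^2 p^2]. *)

Definition in_basisb (L : list nat) : bool :=
  if in_dec (list_eq_dec Nat.eq_dec) L basis_lists then true else false.

Lemma splits_in_basis L pr : In L basis_lists -> In pr (splits L) ->
  In (fst pr) basis_lists /\ In (snd pr) basis_lists.
Proof.
  intros HL Hpr.
  assert (Hall : forallb (fun L => forallb (fun pr => in_basisb (fst pr) && in_basisb (snd pr))
                                           (splits L)) basis_lists = true)
    by (vm_compute; reflexivity).
  rewrite forallb_forall in Hall; specialize (Hall L HL).
  rewrite forallb_forall in Hall; specialize (Hall pr Hpr).
  unfold in_basisb in Hall.
  destruct in_dec, in_dec; [split; assumption | discriminate ..].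
Qed.

Instance feq_Equivalence : Equivalence feq.
Proof.
  split.
  - intros a L _; reflexivity.
  - intros a b H L HL; symmetry; auto.
  - intros a b c Hab Hbc L HL; rewrite Hab; auto.
Qed.

Instance wedge_Proper : Proper (feq ==> feq ==> feq) wedge.
Proof.
  intros a a' Ha b b' Hb L HL; unfold wedge; f_equal.
  apply map_ext_in; intros pr Hpr.
  destruct (splits_in_basis L pr HL Hpr); rewrite Ha, Hb; auto.
Qed.

Instance fscale_Proper : Proper (eq ==> feq ==> feq) fscale.
Proof. intros k k' <- a a' Ha L HL; unfold fscale; rewrite Ha; auto. Qed.

Instance fadd_Proper : Proper (feq ==> feq ==> feq) fadd.
Proof. intros a a' Ha b b' Hb L HL; unfold fadd; rewrite Ha, Hb; auto. Qed.

Instance fnonzero_Proper : Proper (feq ==> iff) fnonzero.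
Proof.
  intros a b Hab; split; intros (L & HL & H); exists L; split; auto;
    [rewrite <- Hab | rewrite Hab]; auto.
Qed.

Lemma wedge_fscale_l k a b : feq (wedge (fscale k a) b) (fscale k (wedge a b)).
Proof.
  intros L _; unfold wedge, fscale, Rsum.
  induction (splits L) as [| pr l IH]; cbn; [ring | rewrite IH; ring].
Qed.

Definition e_coord (i : nat) : form := fun L =>
  match L with [j] => if Nat.eqb j i then 1 else 0 | _ => 0 end.

Definition nf_coord (w : NF) : form := fun L =>
  match L with
  | [1; 2]%nat => n0 w | [1; 4]%nat => n1 w | [2; 3]%nat => - n1 w
  | [3; 4]%nat => n2 w | [1; 3]%nat => - n3 w | [2; 4]%nat => - n3 w
  | _ => 0
  end.

Definition theta_nf_coord (s : R) (w : NF) : form := fun L =>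
  match L with
  | [0; 1; 2]%nat => s * n0 w | [0; 1; 4]%nat => s * n1 w | [0; 2; 3]%nat => - (s * n1 w)
  | [0; 3; 4]%nat => s * n2 w | [0; 1; 3]%nat => - (s * n3 w) | [0; 2; 4]%nat => - (s * n3 w)
  | _ => 0
  end.

Definition vol4 (x : R) : form := fun L => match L with [1; 2; 3; 4]%nat => x | _ => 0 end.
Definition vol5 (x : R) : form := fun L => match L with [0; 1; 2; 3; 4]%nat => x | _ => 0 end.

(* From [alpha0 /\ alpha2 = e^1234] and [alpha1 /\ alpha1 = dtheta /\ dtheta = -2 e^1234]. *)
Definition wedge_coef (a b : NF) : R :=
  n0 a * n2 b + n2 a * n0 b - 2 * n1 a * n1 b - 2 * n3 a * n3 b.

Definition scaleNF (k : R) (w : NF) : NF := mkNF (k * n0 w) (k * n1 w) (k * n2 w) (k * n3 w).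

Definition d_coef (s K : R) (w : NF) : NF :=
  mkNF (-2 * K * n1 w) (n0 w / s ^ 2 - K * n2 w) (2 * n1 w / s ^ 2) 0.

Definition nearly_hypo_omega3 (s K p : R) (w : NF) : NF :=
  mkNF (K * n1 w / (3 * p)) ((s ^ 2 * K * n2 w - n0 w) / (6 * s ^ 2 * p))
       (- n1 w / (3 * s ^ 2 * p)) 0.

Ltac basis_cases H := cbn [basis_lists splits idx5 map app fst] in H;
  repeat destruct H as [<- | H]; [.. | destruct H].
Ltac in_basis := cbn [basis_lists splits idx5 map app fst];
  repeat (first [left; reflexivity | right]).
Ltac eval_coords := unfold wedge, fadd, fscale, fzero;
  cbn [splits map app fst snd inv length filter Nat.ltb Nat.leb Nat.add Rsum fold_right pow
       e_coord nf_coord theta_nf_coord vol4 vol5 Nat.eqb n0 n1 n2 n3 scaleNF].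

Lemma e_coords i : feq (e i) (e_coord i).
Proof.
  intros L _; unfold e, e_coord; destruct (list_eq_dec Nat.eq_dec L [i]) as [-> | Hne].
  - now rewrite Nat.eqb_refl.
  - destruct L as [| j [| k t]]; try reflexivity.
    destruct (Nat.eqb_spec j i) as [-> | _]; [contradiction | reflexivity].
Qed.

Lemma nf_coords w : feq (nf w) (nf_coord w).
Proof.
  unfold nf, alpha0, alpha1, alpha2, dtheta; rewrite !e_coords.
  intros L HL; basis_cases HL; eval_coords; ring.
Qed.

Lemma unit_nf_coords :
  feq alpha0 (nf_coord (mkNF 1 0 0 0)) /\ feq alpha1 (nf_coord (mkNF 0 1 0 0)) /\
  feq alpha2 (nf_coord (mkNF 0 0 1 0)) /\ feq dtheta (nf_coord (mkNF 0 0 0 1)).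
Proof. repeat split; rewrite <- nf_coords; intros L _; unfold nf, fadd, fscale; cbn; ring. Qed.

Lemma wedge_nf_coord a b : feq (wedge (nf_coord a) (nf_coord b)) (vol4 (wedge_coef a b)).
Proof. intros L HL; unfold wedge_coef; basis_cases HL; eval_coords; ring. Qed.

Lemma wedge_theta_nf_coord s w : feq (wedge (theta s) (nf_coord w)) (theta_nf_coord s w).
Proof. unfold theta; rewrite e_coords; intros L HL; basis_cases HL; eval_coords; ring. Qed.

Lemma wedge_theta_theta_nf_coord s s' w : feq (wedge (theta s) (theta_nf_coord s' w)) fzero.
Proof. unfold theta; rewrite e_coords; intros L HL; basis_cases HL; eval_coords; ring. Qed.

Lemma wedge_theta_vol4 s x : feq (wedge (theta s) (vol4 x)) (vol5 (s * x)).
Proof. unfold theta; rewrite e_coords; intros L HL; basis_cases HL; eval_coords; ring. Qed.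

Lemma fscale_theta_nf_coord k s w :
  feq (fscale k (theta_nf_coord s w)) (theta_nf_coord s (scaleNF k w)).
Proof. intros L HL; basis_cases HL; eval_coords; ring. Qed.

Lemma fscale_vol4 k x : feq (fscale k (vol4 x)) (vol4 (k * x)).
Proof. intros L HL; basis_cases HL; eval_coords; ring. Qed.

Lemma fscale_vol5 k x : feq (fscale k (vol5 x)) (vol5 (k * x)).
Proof. intros L HL; basis_cases HL; eval_coords; ring. Qed.

Lemma wedge_nf_nf a b : feq (wedge (nf a) (nf b)) (vol4 (wedge_coef a b)).
Proof. rewrite !nf_coords; apply wedge_nf_coord. Qed.

Lemma wedge_theta_nf s w : feq (wedge (theta s) (nf w)) (theta_nf_coord s w).
Proof. rewrite nf_coords; apply wedge_theta_nf_coord. Qed.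

Lemma d_nf_coords s K w : s <> 0 -> feq (d_nf s K w) (theta_nf_coord s (d_coef s K w)).
Proof.
  intros Hs; destruct unit_nf_coords as (H0 & H1 & H2 & _).
  unfold d_nf, d_alpha0, d_alpha1, d_alpha2; rewrite H0, H1, H2, !wedge_theta_nf_coord.
  intros L HL; unfold d_coef; basis_cases HL; eval_coords; field; assumption.
Qed.

(* [d(ttheta /\ w)] reduces to [-2p dtheta /\ w] because [theta /\ d w] is a multiple of
   [theta /\ theta]. *)
Lemma d_ttheta_wedge_coords s K p w :
  s <> 0 -> feq (d_ttheta_wedge s K p w) (vol4 (4 * p * n3 w)).
Proof.
  intros Hs; destruct unit_nf_coords as (_ & _ & _ & Hdt).
  unfold d_ttheta_wedge, ttheta.
  rewrite d_nf_coords, !wedge_fscale_l, wedge_theta_theta_nf_coord, Hdt, nf_coords,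
    wedge_nf_coord by assumption.
  intros L HL; unfold wedge_coef; basis_cases HL; eval_coords; ring.
Qed.

Lemma nf_feq_iff a b : feq (nf a) (nf b) <-> a = b.
Proof.
  rewrite !nf_coords; split; [| intros ->; reflexivity].
  intros H; destruct a as [a0 a1 a2 a3], b as [b0 b1 b2 b3].
  pose proof (H [1; 2]%nat ltac:(in_basis)) as E0.
  pose proof (H [1; 4]%nat ltac:(in_basis)) as E1.
  pose proof (H [3; 4]%nat ltac:(in_basis)) as E2.
  pose proof (H [1; 3]%nat ltac:(in_basis)) as E3.
  cbn in E0, E1, E2, E3; f_equal; lra.
Qed.

Lemma theta_nf_coord_feq_iff s a b :
  s <> 0 -> feq (theta_nf_coord s a) (theta_nf_coord s b) <-> a = b.
Proof.
  intros Hs; split; [| intros ->; reflexivity].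
  intros H; destruct a as [a0 a1 a2 a3], b as [b0 b1 b2 b3].
  pose proof (H [0; 1; 2]%nat ltac:(in_basis)) as E0.
  pose proof (H [0; 1; 4]%nat ltac:(in_basis)) as E1.
  pose proof (H [0; 3; 4]%nat ltac:(in_basis)) as E2.
  pose proof (H [0; 1; 3]%nat ltac:(in_basis)) as E3.
  cbn in E0, E1, E2, E3.
  f_equal; apply (Rmult_eq_reg_l s); lra.
Qed.

Lemma theta_nf_coord_zero_iff s a :
  s <> 0 -> feq (theta_nf_coord s a) fzero <-> a = mkNF 0 0 0 0.
Proof.
  intros Hs; rewrite <- (theta_nf_coord_feq_iff s a _ Hs).
  enough (Hz : feq fzero (theta_nf_coord s (mkNF 0 0 0 0))) by (rewrite Hz; reflexivity).
  intros L HL; basis_cases HL; eval_coords; ring.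
Qed.

Lemma vol4_feq_iff x y : feq (vol4 x) (vol4 y) <-> x = y.
Proof.
  split; [| intros ->; reflexivity].
  intros H; exact (H [1; 2; 3; 4]%nat ltac:(in_basis)).
Qed.

Lemma vol4_zero_iff x : feq (vol4 x) fzero <-> x = 0.
Proof.
  rewrite <- vol4_feq_iff.
  enough (Hz : feq fzero (vol4 0)) by (rewrite Hz; reflexivity).
  intros L HL; basis_cases HL; reflexivity.
Qed.

Lemma fnonzero_vol5 x : fnonzero (vol5 x) -> x <> 0.
Proof. intros (L & HL & H) ->; apply H; basis_cases HL; reflexivity. Qed.

Lemma natural_SU2_wedge_coef s p a b c :
  natural_SU2 s p a b c ->
  wedge_coef a a <> 0 /\ wedge_coef a b = 0 /\
  wedge_coef b b = wedge_coef a a /\ wedge_coef c c = wedge_coef a a.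
Proof.
  intros [[Hnz (H12 & _ & _ & v & _ & H11 & H22 & H33)] _].
  rewrite !wedge_nf_nf in *.
  unfold ttheta in Hnz; rewrite wedge_fscale_l, wedge_theta_vol4, fscale_vol5 in Hnz.
  repeat split.
  - intros Hq; apply (fnonzero_vol5 _ Hnz); rewrite Hq; ring.
  - apply vol4_zero_iff; assumption.
  - apply vol4_feq_iff; rewrite H22, H11; reflexivity.
  - apply vol4_feq_iff; rewrite H33, H11; reflexivity.
Qed.

Lemma hypo_iff s K p a b c : s <> 0 -> p <> 0 ->
  Defs.hypo s K p a b c <-> d_coef s K a = mkNF 0 0 0 0 /\ n3 b = 0 /\ n3 c = 0.
Proof.
  intros Hs Hp; unfold Defs.hypo.
  rewrite d_nf_coords, !d_ttheta_wedge_coords, theta_nf_coord_zero_iff, !vol4_zero_iff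
    by assumption.
  assert (Hcancel : forall x, 4 * p * x = 0 <-> x = 0).
  { intros x; split; [| intros ->; ring].
    intros Hx; apply Rmult_integral in Hx as [Hx | Hx]; [exfalso; apply Hp; lra | assumption]. }
  rewrite !Hcancel; reflexivity.
Qed.

Lemma d_coef_eq_iff s K p b c : s <> 0 -> p <> 0 ->
  d_coef s K b = scaleNF 3 (scaleNF (-2 * p) c) <-> c = nearly_hypo_omega3 s K p b.
Proof.
  intros Hs Hp; destruct b as [b0 b1 b2 b3], c as [c0 c1 c2 c3].
  unfold d_coef, scaleNF, nearly_hypo_omega3; cbn; split.
  - intros H; injection H as H0 H1 H2 H3; f_equal.
    all: match goal with
         | H : ?x = 3 * (-2 * ?q * ?c) |- ?c = _ =>
             replace c with (x / (-6 * q)) by (rewrite H; field; assumption)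
         end.
    all: field; repeat split; assumption.
  - intros [= -> -> -> ->]; f_equal; field; repeat split; assumption.
Qed.

Lemma nearly_hypo_iff s K p a b c : s <> 0 -> p <> 0 ->
  nearly_hypo s K p a b c <->
  c = nearly_hypo_omega3 s K p b /\ 4 * p * n3 a = -2 * wedge_coef a a.
Proof.
  intros Hs Hp; unfold nearly_hypo.
  rewrite d_nf_coords, d_ttheta_wedge_coords, wedge_nf_nf, fscale_vol4, vol4_feq_iff
    by assumption.
  unfold ttheta.
  rewrite wedge_fscale_l, wedge_theta_nf, !fscale_theta_nf_coord, theta_nf_coord_feq_iff,
    d_coef_eq_iff by assumption.
  reflexivity.
Qed.

Lemma wedge_coef_nearly_hypo_omega3 s K p b : s <> 0 -> p <> 0 ->
  -18 * s ^ 4 * p ^ 2 * wedge_coef (nearly_hypo_omega3 s K p b) (nearly_hypo_omega3 s K p b)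
  = n0 b ^ 2 - 2 * s ^ 2 * K * n0 b * n2 b + s ^ 4 * K ^ 2 * n2 b ^ 2
    + 4 * s ^ 2 * K * n1 b ^ 2.
Proof. intros Hs Hp; unfold wedge_coef, nearly_hypo_omega3; cbn; field; split; assumption. Qed.

Lemma pow2_gt_0 x : x <> 0 -> 0 < x ^ 2.
Proof. intros Hx; rewrite <- Rsqr_pow2; apply Rlt_0_sqr; assumption. Qed.

Lemma curvature_constraints s p K a0 a2 a3 b0 b1 b2 :
  s <> 0 -> a2 <> 0 -> a3 * p <> 0 -> a0 = K * a2 * s ^ 2 ->
  a0 * b2 + a2 * b0 = 0 -> b1 ^ 2 - b0 * b2 = a3 * p ->
  b0 ^ 2 - 2 * s ^ 2 * K * b0 * b2 + s ^ 4 * K ^ 2 * b2 ^ 2 + 4 * s ^ 2 * K * b1 ^ 2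
    = 36 * s ^ 4 * a3 * p ^ 3 ->
  K = 9 * s ^ 2 * p ^ 2 /\ 0 < K /\ a0 * a2 > 0 /\ a3 * p > 0.
Proof.
  intros Hs Ha2 Hap Ha0 H02 H1 H4.
  assert (Hb0 : b0 = - K * s ^ 2 * b2).
  { apply (Rmult_eq_reg_l a2); [| assumption]. rewrite Ha0 in H02; lra. }
  subst b0.
  assert (HK : K = 9 * s ^ 2 * p ^ 2).
  { assert (E : 4 * s ^ 2 * K * (a3 * p) = 36 * s ^ 4 * p ^ 2 * (a3 * p))
      by (rewrite <- H1 at 1; lra).
    pose proof (pow2_gt_0 s Hs).
    assert (E' : (4 * s ^ 2 * (a3 * p)) * (K - 9 * s ^ 2 * p ^ 2) = 0) by lra.
    apply Rmult_integral in E' as [E' | E']; [| lra].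
    exfalso; apply Hap; apply (Rmult_eq_reg_l (4 * s ^ 2)); lra. }
  assert (Hp : p <> 0) by (intros ->; apply Hap; ring).
  pose proof (pow2_gt_0 s Hs); pose proof (pow2_gt_0 p Hp); pose proof (pow2_gt_0 a2 Ha2).
  assert (HKpos : 0 < K) by (rewrite HK; nra).
  repeat split; try assumption.
  - rewrite Ha0; replace (K * a2 * s ^ 2 * a2) with (K * (a2 ^ 2 * s ^ 2)) by ring.
    apply Rlt_gt, Rmult_lt_0_compat, Rmult_lt_0_compat; assumption.
  - pose proof (pow2_ge_0 b1); pose proof (pow2_ge_0 b2).
    assert (0 <= K * s ^ 2 * b2 ^ 2) by (apply Rmult_le_pos; [apply Rmult_le_pos |]; lra).
    lra.
Qed.

Lemma double_hypo_constraints s p K a0 a2 a3 b c :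
  s <> 0 -> p <> 0 ->
  natural_SU2 s p (mkNF a0 0 a2 a3) b c -> double_hypo s K p (mkNF a0 0 a2 a3) b c ->
  n3 b = 0 /\ c = nearly_hypo_omega3 s K p b /\
  a3 ^ 2 - a0 * a2 = a3 * p /\ n1 b ^ 2 - n0 b * n2 b = a3 * p /\ a0 * n2 b + a2 * n0 b = 0 /\
  n0 b ^ 2 - 2 * s ^ 2 * K * n0 b * n2 b + s ^ 4 * K ^ 2 * n2 b ^ 2 + 4 * s ^ 2 * K * n1 b ^ 2
    = 36 * s ^ 4 * a3 * p ^ 3 /\
  a3 * p <> 0.
Proof.
  intros Hs Hp HSU2 [Hhypo Hnearly].
  destruct (natural_SU2_wedge_coef _ _ _ _ _ HSU2) as (Haa & Hab & Hbb & Hcc).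
  apply hypo_iff in Hhypo as (_ & Hb3 & _); [| assumption ..].
  apply nearly_hypo_iff in Hnearly as (Hc & Ha3); [| assumption ..].
  pose proof (wedge_coef_nearly_hypo_omega3 s K p b Hs Hp) as Hquartic.
  rewrite <- Hc, Hcc in Hquartic.
  destruct b as [b0 b1 b2 b3]; cbn in Hb3; subst b3.
  unfold wedge_coef in Haa, Hab, Hbb, Ha3, Hquartic; cbn [n0 n1 n2 n3] in *.
  assert (Hqa : a0 * a2 + a2 * a0 - 2 * 0 * 0 - 2 * a3 * a3 = -2 * (a3 * p)) by lra.
  rewrite Hqa in Haa, Hbb, Hquartic.
  repeat split; (assumption || lra).
Qed.

Lemma double_hypo_of_coefs s p K a0 a2 a3 b0 b1 b2 :
  s <> 0 -> p <> 0 -> a0 = K * a2 * s ^ 2 -> a3 ^ 2 - a0 * a2 = a3 * p ->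
  double_hypo s K p (mkNF a0 0 a2 a3) (mkNF b0 b1 b2 0)
    (nearly_hypo_omega3 s K p (mkNF b0 b1 b2 0)).
Proof.
  intros Hs Hp Ha0 Ha3; split.
  - apply hypo_iff; [assumption .. |].
    unfold d_coef; cbn [n0 n1 n2 n3]; repeat split; f_equal.
    all: try rewrite Ha0; field; assumption.
  - apply nearly_hypo_iff; [assumption .. |].
    split; [reflexivity |]. unfold wedge_coef; cbn [n0 n1 n2 n3]; lra.
Qed.

Theorem mainTheorem10 (s p a0 a2 a3 K : R) (w2 w3 : NF)
  (hs : 0 < s) (hp : p <> 0) (ha2 : a2 <> 0)
  (hK : K = a0 / (a2 * s ^ 2))
  (hSU2 : natural_SU2 s p (mkNF a0 0 a2 a3) w2 w3) :
  (double_hypo s K p (mkNF a0 0 a2 a3) w2 w3 <->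
   exists b0 b1 b2 : R,
     feq (nf w2) (nf (mkNF b0 b1 b2 0)) /\
     feq (nf w3) (nf (mkNF (K * b1 / (3 * p))
                           ((s ^ 2 * K * b2 - b0) / (6 * s ^ 2 * p))
                           (- b1 / (3 * s ^ 2 * p)) 0)) /\
     a3 ^ 2 - a0 * a2 = a3 * p /\
     b1 ^ 2 - b0 * b2 = a3 * p /\
     a0 * b2 + a2 * b0 = 0 /\
     b0 ^ 2 - 2 * s ^ 2 * K * b0 * b2 + s ^ 4 * K ^ 2 * b2 ^ 2 + 4 * s ^ 2 * K * b1 ^ 2
       = 36 * s ^ 4 * a3 * p ^ 3 /\
     a0 * a2 > 0 /\ a3 * p > 0) /\
  (double_hypo s K p (mkNF a0 0 a2 a3) w2 w3 -> 0 < K /\ K = 9 * s ^ 2 * p ^ 2).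
Proof.
  assert (hs0 : s <> 0) by lra.
  assert (ha0 : a0 = K * a2 * s ^ 2) by (rewrite hK; field; split; assumption).
  setoid_rewrite nf_feq_iff.
  split; [split |].
  - intros DH.
    destruct (double_hypo_constraints _ _ _ _ _ _ _ _ hs0 hp hSU2 DH)
      as (Hb3 & Hc & R1 & R2 & R3 & R4 & Hap).
    destruct (curvature_constraints _ _ _ _ _ _ _ _ _ hs0 ha2 Hap ha0 R3 R2 R4)
      as (_ & _ & P1 & P2).
    exists (n0 w2), (n1 w2), (n2 w2).
    destruct w2 as [b0 b1 b2 b3]; cbn [n0 n1 n2 n3] in *; subst; repeat split; assumption.
  - intros (b0 & b1 & b2 & -> & -> & R1 & _).
    apply double_hypo_of_coefs; assumption.
  - intros DH.
    destruct (double_hypo_constraints _ _ _ _ _ _ _ _ hs0 hp hSU2 DH)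
      as (_ & _ & _ & R2 & R3 & R4 & Hap).
    destruct (curvature_constraints _ _ _ _ _ _ _ _ _ hs0 ha2 Hap ha0 R3 R2 R4)
      as (HK9 & HK & _).
    split; assumption.
Qed.
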